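(* Let $R$ be a commutative Noetherian ring of prime characteristic $p$, let $(H^{(\lambda)})_{\lambda\in\Lambda}$ be a non-empty family of $\mathbb{Z}$-graded left $R[x,f]$-modules, and let $H:=\prod'_{\lambda\in\Lambda}H^{(\lambda)}$. Then: (i) $\mathcal{G}(H)=\left\{\bigcap_{\lambda\in\Lambda}\mathfrak{B}_\lambda : \mathfrak{B}_\lambda\in\mathcal{G}(H^{(\lambda)})\text{ for all }\lambda\in\Lambda\right\}$; (ii) consequently, if there is a set $\mathcal{G}'$ of graded two-sided ideals of $R[x,f]$ with $\mathcal{G}(H^{(\lambda)})=\mathcal{G}'$ for all $\lambda\in\Lambda$, then $\mathcal{G}(H)=\mathcal{G}'$; (iii) $\operatorname{HSL}(H)=\sup\{\operatorname{HSL}(H^{(\lambda)}):\lambda\in\Lambda\}$ (even if some $\operatorname{HSL}(H^{(\mu)})=\infty$); thus $H$ is $x$-torsion-free if and only if every $H^{(\lambda)}$ is $x$-torsion-free; (iv) if $\operatorname{HSL}(H)$ is finite, then $\Gamma_x(H)=\prod'_{\lambda\in\Lambda}\Gamma_x(H^{(\lambda)})$ and there is a homogeneous isomorphism of graded left $R[x,f]$-modules $H/\Gamma_x(H)\cong\prod'_{\lambda\in\Lambda}H^{(\lambda)}/\Gamma_x(H^{(\lambda)})$.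
   Context: $R[x,f]$ denotes the Frobenius skew polynomial ring over $R$: as a left $R$-module it is free on $(x^i)_{i\in\mathbb{N}_0}$, with multiplication subject to $xr = r^px$; it is graded with $n$th component $Rx^n$. For $\mathbb{Z}$-graded left $R[x,f]$-modules $H^{(\lambda)}=\bigoplus_n H^{(\lambda)}_n$, $\prod'_{\lambda}H^{(\lambda)}$ denotes the graded left $R[x,f]$-module $\bigoplus_{n\in\mathbb{Z}}\prod_{\lambda}H^{(\lambda)}_n$ with $x$ acting componentwise, $x(h_n^{(\lambda)})_\lambda=(xh_n^{(\lambda)})_\lambda$ (the product in the category of graded left $R[x,f]$-modules and degree-$0$ homogeneous homomorphisms). For a left $R[x,f]$-module $M$: $\operatorname{grann}_{R[x,f]}M$ is the largest graded two-sided ideal of $R[x,f]$ annihilating $M$; $\mathcal{G}(M)$ is the set of graded annihilators of all $R[x,f]$-submodules of $M$; $\Gamma_x(M)=\{m\in M: x^jm=0\text{ for some }j\in\mathbb{N}\}$ is the $x$-torsion submodule, and $M$ is $x$-torsion-free if $\Gamma_x(M)=0$; $\operatorname{HSL}(M)$ is the least $e\in\mathbb{N}_0$ with $x^e\Gamma_x(M)=0$, and $\operatorname{HSL}(M)=\infty$ if no such $e$ exists. *)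

From HB Require Import structures.
From mathcomp Require Import all_boot all_order all_algebra.
From Stdlib Require Import ClassicalDescription.
Set Implicit Arguments.
Unset Strict Implicit.
Unset Printing Implicit Defensive.
Import GRing.Theory.
Local Open Scope ring_scope.

Definition ring_ideal (R : comNzRingType) (I : R -> Prop) : Prop :=
  [/\ I 0, (forall a b, I a -> I b -> I (a + b)) & (forall r a, I a -> I (r * a))].

Definition noetherian (R : comNzRingType) : Prop :=
  forall I : nat -> R -> Prop, (forall n, ring_ideal (I n)) ->
    (forall n a, I n a -> I n.+1 a) ->
    exists N, forall n, (N <= n)%N -> forall a, I n a -> I N a.

(* The Frobenius skew polynomial ring R[x,f]: underlying left R-module   *)
(* {poly R} (free on the x^i = 'X^i), with skew multiplication          *)
(*   (r x^i)(s x^j) = r s^(p^i) x^(i+j).                                *)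
Section Skew.
Variables (R : comNzRingType) (p : nat).

Definition smul (a b : {poly R}) : {poly R} :=
  \sum_(i < size a) \sum_(j < size b) ((a`_i * b`_j ^+ (p ^ i)) *: 'X^(i + j)).

Definition graded_ideal (I : {poly R} -> Prop) : Prop :=
  [/\ I 0, (forall a b, I a -> I b -> I (a + b)), (forall a, I a -> I (- a)),
      (forall a c, I a -> I (smul c a) /\ I (smul a c)) &
      (forall a i, I a -> I (a`_i *: 'X^i))].
End Skew.

(* Presentation of a Z-graded left R[x,f]-module: a carrier predicate    *)
(* inside an ambient type, an equality (setoid, to allow quotients),     *)
(* the R-module operations, the action of x, and the homogeneous         *)
(* elements of each degree.                                              *)
Record gmod (R : comNzRingType) := GMod {
  gcar : Type;
  geq : gcar -> gcar -> Prop;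
  gin : gcar -> Prop;
  g0 : gcar;
  gadd : gcar -> gcar -> gcar;
  gopp : gcar -> gcar;
  gscale : R -> gcar -> gcar;
  gx : gcar -> gcar;
  ghom : int -> gcar -> Prop
}.

Section GMod.
Variable R : comNzRingType.

Definition gsum (M : gmod R) (s : seq int) (c : int -> gcar M) : gcar M :=
  foldr (fun n acc => gadd (c n) acc) (@g0 _ M) s.

Definition act (M : gmod R) (a : {poly R}) (v : gcar M) : gcar M :=
  foldr (fun i acc => gadd (gscale a`_i (iter i (@gx _ M) v)) acc) (@g0 _ M)
        (index_iota 0 (size a)).

Definition submodule (M : gmod R) (N : gcar M -> Prop) : Prop :=
  (forall v, N v -> gin v) /\ N (@g0 _ M) /\
  (forall u v, N u -> N v -> N (gadd u v)) /\ (forall v, N v -> N (gopp v)) /\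
  (forall r v, N v -> N (gscale r v)) /\ (forall v, N v -> N (gx v)).

Definition annihilates (M : gmod R) (I : {poly R} -> Prop) (N : gcar M -> Prop) :=
  forall a v, I a -> N v -> geq (act a v) (@g0 _ M).

Variable p : nat.

Definition is_grann (M : gmod R) (N : gcar M -> Prop) (I : {poly R} -> Prop) :=
  [/\ graded_ideal p I, @annihilates M I N &
      forall J, graded_ideal p J -> @annihilates M J N -> forall a, J a -> I a].

Definition InG (M : gmod R) (I : {poly R} -> Prop) : Prop :=
  exists N, @submodule M N /\ @is_grann M N I.

Definition gamma (M : gmod R) (v : gcar M) : Prop :=
  gin v /\ exists j : nat, geq (iter j (@gx _ M) v) (@g0 _ M).

Definition torsion_free (M : gmod R) : Prop :=
  forall v, @gamma M v -> geq v (@g0 _ M).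

Definition HSL_le (M : gmod R) (e : nat) : Prop :=
  forall v, @gamma M v -> geq (iter e (@gx _ M) v) (@g0 _ M).

Definition pb (P : Prop) : bool :=
  if excluded_middle_informative P then true else false.

Lemma pbP (P : Prop) : reflect P (pb P).
Proof. by rewrite /pb; case: excluded_middle_informative => h; constructor. Qed.

Lemma ex_pb (Q : nat -> Prop) : (exists e, Q e) -> exists e, pb (Q e).
Proof. by case=> e he; exists e; apply/pbP. Qed.

(* HSL(M) in N_0 \cup {oo}; None stands for oo *)
Definition HSL (M : gmod R) : option nat :=
  match excluded_middle_informative (exists e, HSL_le M e) with
  | left h => Some (ex_minn (ex_pb h))
  | right _ => None
  end.

(* A Z-graded left R[x,f]-module given by an R-module V, the action xop  *)
(* of x, and the homogeneous components Hc n (n : int).                 *)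
Definition graded_rxf (V : lmodType R) (xop : V -> V) (Hc : int -> V -> Prop) :=
  (forall u v, xop (u + v) = xop u + xop v) /\
      (forall r v, xop (r *: v) = r ^+ p *: xop v) /\
      (forall n, [/\ Hc n 0, (forall u v, Hc n u -> Hc n v -> Hc n (u + v)) &
                 (forall r v, Hc n v -> Hc n (r *: v))]) /\
      (forall n v, Hc n v -> Hc (n + 1) (xop v)) /\
      (forall v, exists (s : seq int) (c : int -> V),
          [/\ uniq s, (forall n, Hc n (c n)) & v = \sum_(n <- s) c n]) /\
      (forall (s : seq int) (c : int -> V), uniq s -> (forall n, Hc n (c n)) ->
          \sum_(n <- s) c n = 0 -> forall n, n \in s -> c n = 0).

Definition single (V : lmodType R) (xop : V -> V) (Hc : int -> V -> Prop) : gmod R :=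
  @GMod R V (@eq V) (fun _ => True) 0 +%R -%R *:%R xop Hc.

(* prod'_l M_l = bigoplus_n prod_l (M_l)_n, viewed inside prod_l M_l as the *)
(* families whose components are all supported in one finite set of degrees *)
Definition gprod (L : Type) (M : L -> gmod R) : gmod R :=
  @GMod R (forall l, gcar (M l))
    (fun a b => forall l, geq (a l) (b l))
    (fun h => exists s : seq int, forall l, exists c : int -> gcar (M l),
        (forall n, ghom n (c n)) /\ geq (h l) (gsum s c))
    (fun l => @g0 _ (M l))
    (fun a b l => gadd (a l) (b l))
    (fun a l => gopp (a l))
    (fun r a l => gscale r (a l))
    (fun a l => gx (a l))
    (fun n h => forall l, ghom n (h l)).

Definition restrict (M : gmod R) (P : gcar M -> Prop) : gmod R :=
  @GMod R (gcar M) (@geq _ M) (fun v => gin v /\ P v) (@g0 _ M) (@gadd _ M)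
    (@gopp _ M) (@gscale _ M) (@gx _ M) (fun n v => ghom n v /\ P v).

Definition quot (M : gmod R) (N : gcar M -> Prop) : gmod R :=
  @GMod R (gcar M) (fun a b => N (gadd a (gopp b))) (@gin _ M) (@g0 _ M)
    (@gadd _ M) (@gopp _ M) (@gscale _ M) (@gx _ M)
    (fun n v => exists w, ghom n w /\ N (gadd v (gopp w))).

Definition giso (M1 M2 : gmod R) : Prop :=
  exists phi : gcar M1 -> gcar M2,
  (forall a, gin a -> gin (phi a)) /\
      (forall a b, gin a -> gin b -> geq a b -> geq (phi a) (phi b)) /\
      (forall a b, gin a -> gin b -> geq (phi (gadd a b)) (gadd (phi a) (phi b))) /\
      (forall r a, gin a -> geq (phi (gscale r a)) (gscale r (phi a))) /\
      (forall a, gin a -> geq (phi (gx a)) (gx (phi a))) /\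
      (forall n a, gin a -> ghom n a -> ghom n (phi a)) /\
      (forall a b, gin a -> gin b -> geq (phi a) (phi b) -> geq a b) /\
      (forall b, gin b -> exists a, gin a /\ geq (phi a) b).

End GMod.

Arguments gsum {R} M s c.
Arguments act {R} M a v.
Arguments submodule {R} M N.
Arguments annihilates {R} M I N.
Arguments is_grann {R} p M N I.
Arguments InG {R} p M I.
Arguments gamma {R} M v.
Arguments torsion_free {R} M.
Arguments HSL_le {R} M e.
Arguments HSL {R} M.
Arguments graded_rxf {R} p {V} xop Hc.
Arguments single {R} {V} xop Hc.
Arguments gprod {R} {L} M.
Arguments restrict {R} M P.
Arguments quot {R} M N.
Arguments giso {R} M1 M2.

Definition ole (a b : option nat) : bool :=
  match a, b with
  | _, None => true
  | None, Some _ => false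
  | Some m, Some n => (m <= n)%N
  end.

From HB Require Import structures.
From mathcomp Require Import all_boot all_order all_algebra.
From Stdlib Require Import ClassicalDescription IndefiniteDescription ChoiceFacts Eqdep.

(* Everything is computed coordinatewise: [R[x,f]] acts on [H = prod' H^(l)]
   componentwise and each [H^(l)] embeds in [H] as a graded submodule.  Hence a graded
   ideal annihilates a submodule [N] of [H] iff it annihilates every projection of [N],
   so [grann N] is the intersection of the annihilators of the projections; conversely
   any family of submodules [N_l] is the family of projections of [H] intersected with [prod N_l].
   This gives (i), and (ii) follows because each [G(H^(l))] is closed under
   intersections, the graded annihilator of a sum of submodules being the intersection
   of their annihilators.  An element of [H] is killed by [x^e] iff all its coordinates
   are, which gives (iii).  For (iv), [Gamma_x] of a graded module is graded, so when
   [x^e Gamma_x(H) = 0] the identity map induces the isomorphism. *)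

Set Implicit Arguments.
Unset Strict Implicit.
Unset Printing Implicit Defensive.
Import GRing.Theory.
Local Open Scope ring_scope.

Lemma dependent_choice (A : Type) (B : A -> Type) (P : forall a, B a -> Prop) :
  (forall a, exists b, P a b) -> exists f : forall a, B a, forall a, P a (f a).
Proof. exact: (non_dep_dep_functional_choice functional_choice). Qed.

Lemma foldr_addE (V : nmodType) (I : Type) (r : seq I) (F : I -> V) :
  foldr (fun i acc => F i + acc) 0 r = \sum_(i <- r) F i.
Proof. by elim: r => [|i r IH] /=; rewrite ?big_nil // big_cons IH. Qed.

Lemma sum_undup_count (R : comNzRingType) (T : eqType) (W : lmodType R)
    (s : seq T) (c : T -> W) :
  \sum_(n <- s) c n = \sum_(n <- undup s) (count_mem n s)%:R *: c n.
Proof.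
rewrite -big_undup_iterop_count; apply: eq_bigr => n _.
by rewrite Monoid.Theory.iteropE scaler_nat; elim: (count_mem n s) => //= k ->; rewrite mulrS.
Qed.

Lemma sum_subset_uniq (T : eqType) (W : zmodType) (s t : seq T) (c : T -> W) :
  uniq s -> uniq t -> {subset s <= t} ->
  \sum_(n <- s) c n = \sum_(n <- t) (if n \in s then c n else 0).
Proof.
move=> us ut st; rewrite -big_mkcond -big_filter; apply: perm_big.
apply: uniq_perm => // [|x]; first exact: filter_uniq.
by rewrite mem_filter; case hx: (x \in s) => //=; rewrite st.
Qed.

Section GradedAnnihilators.
Variables (R : comNzRingType) (p : nat).

Lemma graded_ideal0 : graded_ideal p (fun a : {poly R} => a = 0).
Proof.
split=> //.
- by move=> a b -> ->; rewrite addr0.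
- by move=> a ->; rewrite oppr0.
- move=> a c ->; rewrite /smul size_poly0 !big_ord0; split=> //.
  by apply: big1 => i _; rewrite big_ord0.
- by move=> a i ->; rewrite coef0 scale0r.
Qed.

Lemma graded_ideal_bigcap (L : Type) (B : L -> {poly R} -> Prop) :
  (forall l, graded_ideal p (B l)) -> graded_ideal p (fun a => forall l, B l a).
Proof.
move=> gB; split.
- by move=> l; case: (gB l).
- by move=> a b ha hb l; case: (gB l) => _ D _ _ _; apply: D.
- by move=> a ha l; case: (gB l) => _ _ N _ _; apply: N.
- by move=> a c ha; split=> l; case: (gB l) => _ _ _ /(_ a c (ha l)) [].
- by move=> a i ha l; case: (gB l) => _ _ _ _ X; apply: X.
Qed.

Lemma is_grann_ext (M : gmod R) (N : gcar M -> Prop) (I I' : {poly R} -> Prop) :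
  (forall a, I a <-> I' a) -> is_grann p M N I -> is_grann p M N I'.
Proof.
move=> e [[I0 ID IN IM IX] ann max]; split; first split.
- exact/e.
- by move=> a b /e ha /e hb; apply/e/ID.
- by move=> a /e ha; apply/e/IN.
- by move=> a c /e /(IM a c) []; split; apply/e.
- by move=> a i /e ha; apply/e/IX.
- by move=> a v /e; apply: ann.
- by move=> J gJ aJ a Ja; apply/e/(max J gJ aJ).
Qed.

Lemma is_grann_unique (M : gmod R) (N : gcar M -> Prop) (I I' : {poly R} -> Prop) :
  is_grann p M N I -> is_grann p M N I' -> forall a, I a <-> I' a.
Proof.
by case=> gI aI maxI [gI' aI' maxI'] a; split; [apply: maxI'|apply: maxI].
Qed.

Lemma is_grann_ext_sub (M : gmod R) (N N' : gcar M -> Prop) (I : {poly R} -> Prop) :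
  (forall v, N v <-> N' v) -> is_grann p M N I -> is_grann p M N' I.
Proof.
move=> e [gI aI maxI]; split=> // [a v Ia /e|J gJ aJ]; first exact: aI.
by apply: maxI => // a v Ja /e; apply: aJ.
Qed.

Lemma InG_ext (M : gmod R) (I I' : {poly R} -> Prop) :
  (forall a, I a <-> I' a) -> InG p M I -> InG p M I'.
Proof. by move=> e [N [sN gI]]; exists N; split=> //; apply: is_grann_ext gI. Qed.

End GradedAnnihilators.

Section HSLNumber.
Variable R : comNzRingType.

Lemma HSL_Some_le (M : gmod R) e : HSL M = Some e -> HSL_le M e.
Proof.
by rewrite /HSL; case: excluded_middle_informative => // h [<-]; case: ex_minnP => m /pbP.
Qed.

Lemma HSL_finite (M : gmod R) : HSL M <> None -> exists e, HSL_le M e.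
Proof. by case E: (HSL M) => [e|] // _; exists e; apply: HSL_Some_le. Qed.

Lemma HSL_le_ole (M : gmod R) e : HSL_le M e -> ole (HSL M) (Some e).
Proof.
move=> he; rewrite /HSL; case: excluded_middle_informative => [h|[]]; last by exists e.
by case: ex_minnP => m _; apply; apply/pbP.
Qed.

Lemma ole_HSL_le (M : gmod R) e :
  (forall e1 e2, HSL_le M e1 -> (e1 <= e2)%N -> HSL_le M e2) ->
  ole (HSL M) (Some e) -> HSL_le M e.
Proof. by move=> mono; case E: (HSL M) => [e'|] //= /(mono _ _ (HSL_Some_le E)). Qed.

End HSLNumber.

Section GradedModule.
Variables (R : comNzRingType) (p : nat) (V : lmodType R) (xop : V -> V)
  (Hc : int -> V -> Prop).
Hypothesis pchar_p : p \in [pchar R].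
Hypothesis gr : graded_rxf p xop Hc.

Let M := single xop Hc.

Lemma xopD u v : xop (u + v) = xop u + xop v.
Proof. by case: gr. Qed.

Lemma xopZ r v : xop (r *: v) = r ^+ p *: xop v.
Proof. by case: gr => _ []. Qed.

Lemma xop0 : xop 0 = 0.
Proof. by apply: (@addrI _ (xop 0)); rewrite -xopD !addr0. Qed.

Lemma xopN v : xop (- v) = - xop v.
Proof. by apply: (@addrI _ (xop v)); rewrite -xopD !subrr xop0. Qed.

Lemma iter_xopD j u v : iter j xop (u + v) = iter j xop u + iter j xop v.
Proof. by elim: j => //= j ->; rewrite xopD. Qed.

Lemma iter_xop0 j : iter j xop 0 = 0.
Proof. by elim: j => //= j ->; rewrite xop0. Qed.

Lemma iter_xopN j v : iter j xop (- v) = - iter j xop v.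
Proof. by elim: j => //= j ->; rewrite xopN. Qed.

Lemma iter_xop_sum j (I : Type) (r : seq I) (F : I -> V) :
  iter j xop (\sum_(i <- r) F i) = \sum_(i <- r) iter j xop (F i).
Proof.
by elim: r => [|i r IH]; rewrite ?big_nil ?iter_xop0 // !big_cons iter_xopD IH.
Qed.

Lemma iter_xopZ j r v : iter j xop (r *: v) = r ^+ (p ^ j) *: iter j xop v.
Proof. by elim: j => [|j IH] /=; rewrite ?expr1 // IH xopZ -exprM expnSr. Qed.

Lemma Hc0 n : Hc n 0.
Proof. by case: gr => _ [_ [/(_ n) [] ]]. Qed.

Lemma HcD n u v : Hc n u -> Hc n v -> Hc n (u + v).
Proof. by case: gr => _ [_ [/(_ n) [_ D _] _]]; apply: D. Qed.

Lemma HcZ n r v : Hc n v -> Hc n (r *: v).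
Proof. by case: gr => _ [_ [/(_ n) [_ _ Z] _]]; apply: Z. Qed.

Lemma HcN n v : Hc n v -> Hc n (- v).
Proof. by rewrite -scaleN1r; apply: HcZ. Qed.

Lemma Hc_xop n v : Hc n v -> Hc (n + 1) (xop v).
Proof. by case: gr => _ [_ [_ [X _]]]; apply: X. Qed.

Lemma Hc_iter j n v : Hc n v -> Hc (n + j%:Z) (iter j xop v).
Proof.
elim: j => [|j IH] /= h; first by rewrite addr0.
by rewrite -[j.+1]addn1 PoszD addrA; apply/Hc_xop/IH.
Qed.

Lemma Hc_decomp v : exists (s : seq int) (c : int -> V),
  [/\ uniq s, (forall n, Hc n (c n)) & v = \sum_(n <- s) c n].
Proof. by case: gr => _ [_ [_ [_ [D _]]]]; apply: D. Qed.

Lemma Hc_sum_eq0 (s : seq int) (c : int -> V) : uniq s -> (forall n, Hc n (c n)) ->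
  \sum_(n <- s) c n = 0 -> forall n, n \in s -> c n = 0.
Proof. by case: gr => _ [_ [_ [_ [_ U]]]]; apply: U. Qed.

Lemma gsum_single (s : seq int) (c : int -> V) : gsum M s c = \sum_(n <- s) c n.
Proof. exact: foldr_addE. Qed.

Lemma actE (a : {poly R}) v : act M a v = \sum_(0 <= i < size a) a`_i *: iter i xop v.
Proof. exact: foldr_addE. Qed.

Lemma actE_leq n (a : {poly R}) v : (size a <= n)%N ->
  act M a v = \sum_(0 <= i < n) a`_i *: iter i xop v.
Proof.
move=> an; rewrite actE (big_cat_nat (leq0n _) an) /= [X in _ = _ + X]big1_seq ?addr0 //.
by move=> i /andP[_]; rewrite mem_index_iota => /andP[ai _]; rewrite nth_default ?scale0r.
Qed.

Lemma act_poly0 v : act M 0 v = 0.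
Proof. by rewrite actE size_poly0 big_geq. Qed.

Lemma act_polyD (a b : {poly R}) v : act M (a + b) v = act M a v + act M b v.
Proof.
rewrite !(@actE_leq (maxn (size a) (size b))) ?leq_maxl ?leq_maxr ?size_polyD //.
by rewrite -big_split; apply: eq_bigr => i _; rewrite coefD scalerDl.
Qed.

Lemma act_poly_sum (I : Type) (r : seq I) (F : I -> {poly R}) v :
  act M (\sum_(i <- r) F i) v = \sum_(i <- r) act M (F i) v.
Proof.
by elim: r => [|i r IH]; rewrite ?big_nil ?act_poly0 // !big_cons act_polyD IH.
Qed.

Lemma act_monomial c k v : act M (c *: 'X^k) v = c *: iter k xop v.
Proof.
rewrite (@actE_leq k.+1); last by rewrite (leq_trans (size_scale_leq _ _)) ?size_polyXn.
rewrite big_nat_recr //= coefZ coefXn eqxx mulr1 big1_seq ?add0r // => i /andP[_].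
by rewrite mem_index_iota => /andP[_ ik]; rewrite coefZ coefXn (ltn_eqF ik) mulr0 scale0r.
Qed.

Lemma act_vec0 (a : {poly R}) : act M a 0 = 0.
Proof. by rewrite actE big1 // => i _; rewrite iter_xop0 scaler0. Qed.

Lemma act_vecD (a : {poly R}) u w : act M a (u + w) = act M a u + act M a w.
Proof. by rewrite !actE -big_split; apply: eq_bigr => i _; rewrite iter_xopD scalerDr. Qed.

Lemma act_vecN (a : {poly R}) w : act M a (- w) = - act M a w.
Proof. by rewrite !actE -sumrN; apply: eq_bigr => i _; rewrite iter_xopN scalerN. Qed.

Lemma p_gt0 : (0 < p)%N.
Proof. by apply: prime_gt0; case/andP: pchar_p. Qed.

Lemma smulE n m (a b : {poly R}) : (size a <= n)%N -> (size b <= m)%N ->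
  smul p a b = \sum_(0 <= i < n) \sum_(0 <= j < m) ((a`_i * b`_j ^+ (p ^ i)) *: 'X^(i + j)).
Proof.
move=> an bm; rewrite /smul.
rewrite -(big_mkord xpredT (fun i => \sum_(j < size b) (a`_i * b`_j ^+ (p ^ i)) *: 'X^(i + j))).
rewrite (big_cat_nat (leq0n _) an) /=.
rewrite [X in _ = _ + X]big1_seq ?addr0; last first.
  move=> i /andP[_]; rewrite mem_index_iota => /andP[ai _].
  by rewrite big1 // => j _; rewrite nth_default // mul0r scale0r.
apply: eq_bigr => i _.
rewrite -(big_mkord xpredT (fun j => (a`_i * b`_j ^+ (p ^ i)) *: 'X^(i + j))).
rewrite (big_cat_nat (leq0n _) bm) /=.
rewrite [X in _ = _ + X]big1_seq ?addr0 // => j /andP[_].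
rewrite mem_index_iota => /andP[bj _].
by rewrite (nth_default _ bj) expr0n expn_eq0 eqn0Ngt p_gt0 /= mulr0 scale0r.
Qed.

Lemma act_vecZ (a : {poly R}) r w : act M a (r *: w) = act M (smul p a r%:P) w.
Proof.
rewrite (@smulE (size a) 1) // ?size_polyC_leq1 // act_poly_sum actE.
apply: eq_bigr => i _; rewrite big_nat1 act_monomial addn0 coefC eqxx.
by rewrite iter_xopZ scalerA.
Qed.

Lemma act_vec_xop (a : {poly R}) w : act M a (xop w) = act M (smul p a 'X) w.
Proof.
rewrite (@smulE (size a) 2) // ?size_polyX // act_poly_sum actE.
apply: eq_bigr => i _; rewrite big_nat_recr //= big_nat1 act_polyD !act_monomial.
rewrite !coefX /= expr0n expn_eq0 eqn0Ngt p_gt0 /= mulr0 scale0r add0r.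
by rewrite expr1n mulr1 addn1 -iterSr.
Qed.

Lemma frobeniusD i (x y : R) : (x + y) ^+ (p ^ i) = x ^+ (p ^ i) + y ^+ (p ^ i).
Proof.
apply: exprDn_pchar; rewrite pnatX; apply/orP; left.
by rewrite pnatE //; case/andP: pchar_p.
Qed.

Lemma smulDl (a b c : {poly R}) : smul p (a + b) c = smul p a c + smul p b c.
Proof.
have ab := size_polyD a b.
rewrite !(@smulE (maxn (size a) (size b)) (size c)) ?leq_maxl ?leq_maxr //.
rewrite -big_split; apply: eq_bigr => i _; rewrite -big_split.
by apply: eq_bigr => j _; rewrite coefD mulrDl scalerDl.
Qed.

Lemma smulDr (a b c : {poly R}) : smul p c (a + b) = smul p c a + smul p c b.
Proof.
have ab := size_polyD a b.
rewrite !(@smulE (size c) (maxn (size a) (size b))) ?leq_maxl ?leq_maxr //.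
rewrite -big_split; apply: eq_bigr => i _; rewrite -big_split.
by apply: eq_bigr => j _; rewrite coefD frobeniusD mulrDr scalerDl.
Qed.

Definition ideal_add (J1 J2 : {poly R} -> Prop) a :=
  exists a1 a2, [/\ J1 a1, J2 a2 & a = a1 + a2].

Lemma graded_ideal_add J1 J2 : graded_ideal p J1 -> graded_ideal p J2 ->
  graded_ideal p (ideal_add J1 J2).
Proof.
case=> z1 D1 N1 M1 X1 [z2 D2 N2 M2 X2]; split.
- by exists 0, 0; rewrite addr0.
- move=> _ _ [a1 [a2 [A1 A2 ->]]] [b1 [b2 [B1 B2 ->]]].
  by exists (a1 + b1), (a2 + b2); rewrite addrACA; split; [apply: D1|apply: D2|].
- move=> _ [a1 [a2 [A1 A2 ->]]].
  by exists (- a1), (- a2); rewrite opprD; split; [apply: N1|apply: N2|].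
- move=> _ c [a1 [a2 [A1 A2 ->]]]; have [? ?] := M1 _ c A1; have [? ?] := M2 _ c A2.
  by split; [exists (smul p c a1), (smul p c a2); rewrite smulDr
            |exists (smul p a1 c), (smul p a2 c); rewrite smulDl].
- move=> _ i [a1 [a2 [A1 A2 ->]]].
  by exists (a1`_i *: 'X^i), (a2`_i *: 'X^i); rewrite coefD scalerDl; split; [apply: X1|apply: X2|].
Qed.

Lemma annihilates_add J1 J2 (N : V -> Prop) : annihilates M J1 N -> annihilates M J2 N ->
  annihilates M (ideal_add J1 J2) N.
Proof.
move=> A1 A2 _ v [a1 [a2 [J1a J2a ->]]] Nv /=.
by rewrite act_polyD (A1 _ _ J1a Nv) (A2 _ _ J2a Nv) addr0.
Qed.

(* The largest graded annihilating ideal is the union of all of them, which is an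
   ideal because the sum of two graded annihilating ideals is one. *)
Definition grann_of (N : V -> Prop) a :=
  exists J, [/\ graded_ideal p J, annihilates M J N & J a].

Lemma is_grann_of (N : V -> Prop) : is_grann p M N (grann_of N).
Proof.
split; first split.
- by exists (fun a => a = 0); split=> //; [apply: graded_ideal0|move=> a v -> _; apply: act_poly0].
- move=> a b [J1 [g1 n1 j1]] [J2 [g2 n2 j2]]; exists (ideal_add J1 J2).
  by split; [apply: graded_ideal_add|apply: annihilates_add|exists a, b].
- by move=> a [J [gJ n j]]; exists J; split=> //; case: gJ => _ _ JN _ _; apply: JN.
- by move=> a c [J [gJ n j]]; case: (gJ) => _ _ _ /(_ a c j) [? ?]; split; exists J.
- by move=> a i [J [gJ n j]]; exists J; split=> //; case: gJ => _ _ _ _ JX; apply: JX.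
- by move=> a v [J [_ n j]] Nv; apply: n.
- by move=> J gJ nJ a Ja; exists J.
Qed.

Lemma submodule_killed (I : {poly R} -> Prop) : graded_ideal p I ->
  submodule M (fun w => forall a, I a -> act M a w = 0).
Proof.
case=> _ _ _ IM _; do ![split=> //].
- by move=> b _; apply: act_vec0.
- by move=> u w hu hw b Ib; rewrite act_vecD hu // hw // addr0.
- by move=> w hw b Ib; rewrite act_vecN hw // oppr0.
- by move=> r w hw b Ib; rewrite act_vecZ hw //; case: (IM b r%:P Ib).
- by move=> w hw b Ib; rewrite act_vec_xop hw //; case: (IM b 'X Ib).
Qed.

Definition span (G : V -> Prop) v :=
  forall T, submodule M T -> (forall w, G w -> T w) -> T v.

Lemma submodule_span (G : V -> Prop) : submodule M (span G).
Proof.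
do ![split=> //].
- by move=> T [_ [T0 _]].
- move=> u v hu hv T sT GT; case: (sT) => _ [_ [TD _]].
  by apply: TD; [apply: hu sT GT|apply: hv sT GT].
- by move=> v hv T sT GT; case: (sT) => _ [_ [_ [TN _]]]; apply/TN/(hv T sT GT).
- by move=> r v hv T sT GT; case: (sT) => _ [_ [_ [_ [TZ _]]]]; apply/TZ/(hv T sT GT).
- by move=> v hv T sT GT; case: (sT) => _ [_ [_ [_ [_ TX]]]]; apply/TX/(hv T sT GT).
Qed.

Lemma InG_bigcap (L : Type) (B : L -> {poly R} -> Prop) :
  (forall l, InG p M (B l)) -> InG p M (fun a => forall l, B l a).
Proof.
move=> InB; have [N hN] := dependent_choice InB.
have gB l : graded_ideal p (B l) by case: (hN l) => _ [].
exists (span (fun w => exists l, N l w)); split; first exact: submodule_span.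
split; first exact: graded_ideal_bigcap.
- move=> a v Ba spanv; apply: (spanv _ (submodule_killed (graded_ideal_bigcap gB))) a Ba.
  by move=> w [l Nw] b Bb; case: (hN l) => _ [_ ann _]; apply: ann (Bb l) Nw.
- move=> J gJ aJ a Ja l; case: (hN l) => _ [_ _ max]; apply: (max J gJ) => // b w Jb Nw.
  by apply: aJ => // T _; apply; exists l.
Qed.

Lemma gammaE v : gamma M v <-> exists j, iter j xop v = 0.
Proof. by split; [case|split]. Qed.

Lemma gamma0 v : v = 0 -> gamma M v.
Proof. by move=> ->; apply/gammaE; exists 0%N. Qed.

Lemma gammaD u w : gamma M u -> gamma M w -> gamma M (u + w).
Proof.
move=> /gammaE[j1 uj1] /gammaE[j2 wj2]; apply/gammaE; exists (j2 + j1)%N.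
by rewrite iter_xopD iterD uj1 iter_xop0 add0r addnC iterD wj2 iter_xop0.
Qed.

Lemma gamma_sum (s : seq int) (c : int -> V) :
  (forall n, gamma M (c n)) -> gamma M (\sum_(n <- s) c n).
Proof. by move=> gc; apply: (big_ind (gamma M)) => //; [apply: gamma0|apply: gammaD]. Qed.

Lemma gammaN v : gamma M v -> gamma M (- v).
Proof. by move=> /gammaE[j vj]; apply/gammaE; exists j; rewrite iter_xopN vj oppr0. Qed.

(* [x^j] shifts degrees by [j], so [x^j] of a homogeneous decomposition is again one. *)
Lemma homog_iter_eq0 j (s : seq int) (c : int -> V) :
  uniq s -> (forall n, Hc n (c n)) ->
  iter j xop (\sum_(n <- s) c n) = 0 -> forall n, n \in s -> iter j xop (c n) = 0.
Proof.
move=> us Hcc sum0 n ns.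
pose d m := iter j xop (c (m - j%:Z)).
have Hcd m : Hc m (d m) by rewrite /d -{1}(subrK j%:Z m); apply: Hc_iter.
have ushift : uniq (map (+%R^~ j%:Z) s) by rewrite map_inj_uniq //; apply: addIr.
have := Hc_sum_eq0 ushift Hcd _ (map_f (+%R^~ j%:Z) ns); rewrite /d addrK; apply.
by rewrite big_map; under eq_bigr do rewrite addrK; rewrite -iter_xop_sum.
Qed.

Lemma HSL_le_mono e1 e2 : HSL_le M e1 -> (e1 <= e2)%N -> HSL_le M e2.
Proof.
by move=> he1 le v gv; rewrite /= -(subnK le) iterD (he1 v gv) iter_xop0.
Qed.

End GradedModule.

Section Product.
Variables (R : comNzRingType) (p : nat) (L : Type) (V : L -> lmodType R)
  (xop : forall l, V l -> V l) (Hc : forall l, int -> V l -> Prop).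
Arguments xop : clear implicits.
Arguments Hc : clear implicits.
Hypothesis pchar_p : p \in [pchar R].
Hypothesis gr : forall l, graded_rxf p (xop l) (Hc l).

Let Hs := fun l => single (xop l) (Hc l).
Let H := gprod Hs.

Lemma gin_gprodP (h : gcar H) : gin h <-> exists s : seq int, forall l,
  exists c : int -> V l, (forall n, Hc l n (c n)) /\ h l = \sum_(n <- s) c n.
Proof.
by split=> -[s hs]; exists s => l; have [c [Hcc hl]] := hs l; exists c;
  rewrite /= gsum_single in hl *.
Qed.

Lemma gin_gprod_uniq (h : gcar H) : gin h -> exists s : seq int, uniq s /\ forall l,
  exists c : int -> V l, (forall n, Hc l n (c n)) /\ h l = \sum_(n <- s) c n.
Proof.
case/gin_gprodP=> s hs; exists (undup s); split=> [|l]; first exact: undup_uniq.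
have [c [Hcc ->]] := hs l; exists (fun n => (count_mem n s)%:R *: c n).
by split=> [n|]; [apply: (HcZ (gr l))|apply: sum_undup_count].
Qed.

Lemma gin_gprod0 : gin (g0 H).
Proof.
apply/gin_gprodP; exists [::] => l; exists (fun _ => 0).
by rewrite big_nil; split=> // n; apply: (Hc0 (gr l)).
Qed.

Lemma gin_gprodD (a b : gcar H) : gin a -> gin b -> gin (gadd a b).
Proof.
case/gin_gprod_uniq=> s1 [us1 h1] /gin_gprod_uniq [s2 [us2 h2]]; apply/gin_gprodP.
exists (undup (s1 ++ s2)) => l; have [c1 [Hc1 e1]] := h1 l; have [c2 [Hc2 e2]] := h2 l.
exists (fun n => (if n \in s1 then c1 n else 0) + (if n \in s2 then c2 n else 0)); split.
  by move=> n; apply: (HcD (gr l)); case: ifP => _ //; apply: (Hc0 (gr l)).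
rewrite big_split /= e1 e2 -!sum_subset_uniq ?undup_uniq // => x sx;
  by rewrite mem_undup mem_cat sx ?orbT.
Qed.

Lemma gin_gprodN (a : gcar H) : gin a -> gin (gopp a).
Proof.
case/gin_gprodP=> s hs; apply/gin_gprodP; exists s => l; have [c [Hcc e]] := hs l.
by exists (fun n => - c n); split=> [n|]; [apply: (HcN (gr l))|rewrite /= e sumrN].
Qed.

Lemma gin_gprodZ r (a : gcar H) : gin a -> gin (gscale r a).
Proof.
case/gin_gprodP=> s hs; apply/gin_gprodP; exists s => l; have [c [Hcc e]] := hs l.
by exists (fun n => r *: c n); split=> [n|]; [apply: (HcZ (gr l))|rewrite /= e scaler_sumr].
Qed.

Lemma gin_gprodX (a : gcar H) : gin a -> gin (gx a).
Proof.
case/gin_gprodP=> s hs; apply/gin_gprodP; exists (map (+%R^~ 1) s) => l.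
have [c [Hcc e]] := hs l; exists (fun m => xop l (c (m - 1))); split.
  by move=> m; rewrite -{1}(subrK 1 m); apply: (Hc_xop (gr l)).
rewrite /= e big_map; have /= -> := iter_xop_sum (gr l) 1.
by apply: eq_bigr => n _; rewrite addrK.
Qed.

Lemma iter_gprod j (h : gcar H) l : iter j (@gx _ H) h l = iter j (xop l) (h l).
Proof. by elim: j => //= j ->. Qed.

Lemma act_gprod a (h : gcar H) l : act H a h l = act (Hs l) a (h l).
Proof. by rewrite /act; elim: (index_iota 0 (size a)) => //= i r ->; rewrite iter_gprod. Qed.

Definition embed (l : L) (v : V l) : gcar H := fun l' =>
  match excluded_middle_informative (l = l') with
  | left e => eq_rect l V v l' e
  | right _ => 0
  end.

Lemma embed_at l v : embed v l = v.
Proof. by rewrite /embed; case: excluded_middle_informative => // e; rewrite -eq_rect_eq. Qed.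

Lemma embed_ind (P : forall l', V l' -> Prop) l v :
  P l v -> (forall l', P l' 0) -> forall l', P l' (embed v l').
Proof.
move=> Pv P0 l'; rewrite /embed; case: excluded_middle_informative => [e|_]; last exact: P0.
by case: l' / e.
Qed.

Lemma gin_embed l v : gin (embed (l:=l) v : gcar H).
Proof.
have [s [c [_ Hcc ev]]] := Hc_decomp (gr l) v; apply/gin_gprodP; exists s.
apply: (@embed_ind (fun l' w => exists c : int -> V l',
  (forall n, Hc l' n (c n)) /\ w = \sum_(n <- s) c n)) => [|l']; first by exists c.
by exists (fun _ => 0); rewrite big1 //; split=> // n; apply: (Hc0 (gr l')).
Qed.

Lemma gamma_gprodE (h : gcar H) :
  gamma H h <-> gin h /\ exists j, forall l, iter j (xop l) (h l) = 0.
Proof.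
split=> -[hi [j hj]]; split=> //; exists j => l.
- by rewrite -iter_gprod; apply: hj.
- by rewrite /= iter_gprod; apply: hj.
Qed.

Lemma HSL_le_gprod e : HSL_le H e <-> forall l, HSL_le (Hs l) e.
Proof.
split=> [He l v /gammaE [j vj]|Hel h /gamma_gprodE [hi [j hj]] l].
- have : gamma H (embed v).
    apply/gamma_gprodE; split; first exact: gin_embed.
    exists j; apply: (@embed_ind (fun l' w => iter j (xop l') w = 0)) => // l'.
    by apply: (iter_xop0 (gr l')).
  by move/He/(_ l); rewrite /= iter_gprod embed_at.
- by rewrite /= iter_gprod; apply: Hel; apply/gammaE; exists j.
Qed.

Definition proj l (N : gcar H -> Prop) (v : V l) := exists h, N h /\ h l = v.
Arguments proj : clear implicits.

Lemma submodule_proj l N : submodule H N -> submodule (Hs l) (proj l N).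
Proof.
case=> _ [N0 [ND [NN [NZ NX]]]]; do ![split=> //].
- by exists (g0 H).
- by move=> _ _ [h1 [N1 <-]] [h2 [N2 <-]]; exists (gadd h1 h2); split=> //; apply: ND.
- by move=> _ [h [Nh <-]]; exists (gopp h); split=> //; apply: NN.
- by move=> r _ [h [Nh <-]]; exists (gscale r h); split=> //; apply: NZ.
- by move=> _ [h [Nh <-]]; exists (gx h); split=> //; apply: NX.
Qed.

Lemma annihilates_gprod J N :
  annihilates H J N <-> forall l, annihilates (Hs l) J (proj l N).
Proof.
split=> [aJ l b _ Jb [h [Nh <-]]|aJ b h Jb Nh l].
- by rewrite -act_gprod; apply: aJ.
- by rewrite /= act_gprod; apply: aJ Jb _; exists h.
Qed.

Lemma is_grann_gprod N B : (forall l, is_grann p (Hs l) (proj l N) (B l)) ->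
  is_grann p H N (fun a => forall l, B l a).
Proof.
move=> gB; split.
- by apply: graded_ideal_bigcap => l; case: (gB l).
- by apply/annihilates_gprod => l a v Ba; case: (gB l) => _ ann _; apply: ann (Ba l).
- by move=> J gJ /annihilates_gprod aJ a Ja l; case: (gB l) => _ _ max; apply: max (aJ l) a Ja.
Qed.

Lemma submodule_gprod (N : forall l, V l -> Prop) :
  (forall l, submodule (Hs l) (N l)) -> submodule H (fun h => gin h /\ forall l, N l (h l)).
Proof.
move=> sN; split; first by move=> h [].
split; first by split=> [|l]; [apply: gin_gprod0|case: (sN l) => _ []].
split.
  move=> u v [gu Nu] [gv Nv]; split=> [|l]; first exact: gin_gprodD.
  by case: (sN l) => _ [_ [ND _]]; apply: ND.
split.
  move=> u [gu Nu]; split=> [|l]; first exact: gin_gprodN.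
  by case: (sN l) => _ [_ [_ [NN _]]]; apply: NN.
split.
  move=> r u [gu Nu]; split=> [|l]; first exact: gin_gprodZ.
  by case: (sN l) => _ [_ [_ [_ [NZ _]]]]; apply: NZ.
move=> u [gu Nu]; split=> [|l]; first exact: gin_gprodX.
by case: (sN l) => _ [_ [_ [_ [_ NX]]]]; apply: NX.
Qed.

Lemma proj_gprod (N : forall l, V l -> Prop) l v : (forall l', N l' 0) ->
  proj l (fun h => gin h /\ forall l', N l' (h l')) v <-> N l v.
Proof.
move=> N0; split=> [[h [[_ Nh] <-]] //|Nv]; exists (embed v); split; last exact: embed_at.
by split; [apply: gin_embed|apply: embed_ind].
Qed.

Lemma InG_gprod I : InG p H I <-> exists B : L -> {poly R} -> Prop,
  (forall l, InG p (Hs l) (B l)) /\ (forall a, I a <-> forall l, B l a).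
Proof.
split=> [[N [sN gI]]|[B [InB IB]]].
- exists (fun l => grann_of p (xop l) (Hc l) (proj l N)); split.
    by move=> l; exists (proj l N); split; [apply: submodule_proj|apply: is_grann_of].
  by apply: is_grann_unique gI _; apply: is_grann_gprod => l; apply: is_grann_of.
- have [N hN] := dependent_choice InB.
  have sN l : submodule (Hs l) (N l) by case: (hN l).
  exists (fun h : gcar H => gin h /\ forall l, N l (h l)); split; first exact: submodule_gprod.
  apply: is_grann_ext (fun a => iff_sym (IB a)) _; apply: is_grann_gprod => l.
  apply: is_grann_ext_sub (hN l).2 => v; apply: iff_sym; apply: proj_gprod => l'.
  by case: (sN l') => _ [].
Qed.

Lemma InG_gprod_const (G' : ({poly R} -> Prop) -> Prop) : inhabited L ->
  (forall l I, InG p (Hs l) I <-> G' I) -> forall I, InG p H I <-> G' I.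
Proof.
case=> l0 hG I; split=> [/InG_gprod [B [InB IB]]|G'I]; last first.
  by apply/InG_gprod; exists (fun _ => I); split=> [l|a]; [apply/hG|split=> [? _|/(_ l0)]].
apply/(hG l0)/(InG_ext (fun a => iff_sym (IB a))).
by apply: InG_bigcap => // l; apply/(hG l0)/(hG l).
Qed.

Lemma HSL_gprod_ub l : ole (HSL (Hs l)) (HSL H).
Proof.
case E: (HSL H) => [e|]; last by case: (HSL (Hs l)).
exact/HSL_le_ole/(HSL_le_gprod e).1/HSL_Some_le.
Qed.

Lemma HSL_gprod_lub o : (forall l, ole (HSL (Hs l)) o) -> ole (HSL H) o.
Proof.
case: o => [m|] hl; last by case: (HSL H).
apply/HSL_le_ole/HSL_le_gprod => l; apply: ole_HSL_le (hl l).
exact: HSL_le_mono (gr l).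
Qed.

Lemma torsion_free_gprod : torsion_free H <-> forall l, torsion_free (Hs l).
Proof. exact: HSL_le_gprod 0%N. Qed.

Lemma gamma_gprod e : HSL_le H e -> forall h,
  gamma H h <-> @gin _ (gprod (fun l => restrict (Hs l) (gamma (Hs l)))) h.
Proof.
move=> /HSL_le_gprod Hel h; split.
- case/gamma_gprodE => /gin_gprod_uniq [s [us hs]] [j hj]; exists s => l.
  have [c [Hcc hl]] := hs l; exists (fun n => if n \in s then c n else 0); split.
    move=> n; case: ifP => ns; last by split; [apply: (Hc0 (gr l))|apply: gamma0].
    split=> //; apply/gammaE; exists j.
    by rewrite (homog_iter_eq0 (gr l) us Hcc _ ns) // -hl hj.
  by rewrite /= /gsum foldr_addE hl; apply: eq_big_seq => n ->.
- case=> s hs; apply/gamma_gprodE; split.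
    apply/gin_gprodP; exists s => l; have [c [Hcc hl]] := hs l; exists c.
    by split=> [n|]; [case: (Hcc n)|rewrite -gsum_single].
  exists e => l; have [c [Hcc ->]] := hs l.
  by rewrite /= /gsum foldr_addE (iter_xop_sum (gr l)) big1 // => n _; apply: Hel (Hcc n).2.
Qed.

Lemma giso_quot_gamma_gprod e : HSL_le H e ->
  giso (quot H (gamma H)) (gprod (fun l => quot (Hs l) (gamma (Hs l)))).
Proof.
move=> He; have /HSL_le_gprod Hel := He; exists id; split.
  move=> a /gin_gprodP [s hs]; exists s => l; have [c [Hcc hl]] := hs l.
  exists c; split=> [n|]; first by exists (c n); split=> //; apply: gamma0; rewrite /= subrr.
  by apply: gamma0; rewrite /= /gsum foldr_addE hl subrr.
split; first by move=> a b _ _ /gamma_gprodE [_ [j hj]] l; split=> //; exists j; apply: hj.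
split; first by move=> a b _ _ l; apply: gamma0; rewrite /= subrr.
split; first by move=> r a _ l; apply: gamma0; rewrite /= subrr.
split; first by move=> a _ l; apply: gamma0; rewrite /= subrr.
split.
  move=> n a _ [w [Hw /gamma_gprodE [_ [j hj]]]] l; exists (w l).
  by split=> //; split=> //; exists j; apply: hj.
split.
  move=> a b ga gb ab; apply/gamma_gprodE.
  split; first by apply: gin_gprodD => //; apply: gin_gprodN.
  by exists e => l; apply: Hel; apply: ab.
move=> b [s hs]; have [c hc] := dependent_choice hs.
have hw_ex l : exists w : int -> V l, forall n, Hc l n (w n) /\ gamma (Hs l) (c l n - w n).
  by case: (hc l) => /(@dependent_choice int (fun _ => V l)) [w hw] _; exists w.
have [w hw] := dependent_choice hw_ex.
exists (fun l => \sum_(n <- s) w l n); split.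
  by apply/gin_gprodP; exists s => l; exists (w l); split=> // n; case: (hw l n).
move=> l; have gsum_w := gamma_sum (gr l) s (fun n => (hw l n).2).
have := gammaN (gr l) (gammaD (gr l) (proj2 (hc l)) gsum_w).
by rewrite /= /gsum foldr_addE sumrB addrA subrK opprB.
Qed.

End Product.

Theorem lemma2p3 (R : comNzRingType) (p : nat) (Lam : Type)
  (V : Lam -> lmodType R) (xop : forall l, V l -> V l)
  (Hc : forall l, int -> V l -> Prop) :
  p \in [pchar R] -> noetherian R -> inhabited Lam ->
  (forall l, graded_rxf p (xop l) (Hc l)) ->
  let Hs := fun l => single (xop l) (Hc l) in
  let H := gprod Hs in
  [/\ (forall I, InG p H I <->
        exists B : Lam -> {poly R} -> Prop,
          (forall l, InG p (Hs l) (B l)) /\ (forall a, I a <-> forall l, B l a)),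
      (forall G' : ({poly R} -> Prop) -> Prop,
        (forall I, G' I -> graded_ideal p I) ->
        (forall l I, InG p (Hs l) I <-> G' I) ->
        forall I, InG p H I <-> G' I),
      ((forall l, ole (HSL (Hs l)) (HSL H)) /\
       (forall o, (forall l, ole (HSL (Hs l)) o) -> ole (HSL H) o)) /\
      (torsion_free H <-> forall l, torsion_free (Hs l)) &
      (HSL H <> None ->
        (forall h, gamma H h <->
           @gin _ (gprod (fun l => restrict (Hs l) (gamma (Hs l)))) h) /\
        giso (quot H (gamma H)) (gprod (fun l => quot (Hs l) (gamma (Hs l)))))].
Proof.
move=> pchar_p _ inhabited_Lam gr /=; split.
- exact: InG_gprod pchar_p gr.
- move=> G' _; exact (InG_gprod_const pchar_p gr inhabited_Lam).
- split; last exact: torsion_free_gprod gr.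
  by split; [apply: HSL_gprod_ub gr|apply: HSL_gprod_lub gr].
- case/HSL_finite=> e He; split; first exact (gamma_gprod gr He).
  exact (giso_quot_gamma_gprod gr He).
Qed.
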